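(* Let $A$ be a subring of $\mathbb{R}$ and let $H(A)$ be as in the context. For each $r\in A$ and each $p\in\mathbb{R}$ there exists $f\in H(A)$ with the following properties: (1) $f$ is supported on $[y,\infty)$ for some $y<p$; (2) the restriction of $f$ to $(p,\infty)$ equals $t\mapsto t+r$.
   Context: For a subring $A\subseteq\mathbb{R}$, let $P_A\subseteq\mathbb{R}\cup\{\infty\}$ be the set of fixed points of hyperbolic elements (those with $|\mathrm{trace}|>2$) of $PSL_2(A)$ acting by Möbius transformations. $H(A)$ is the group of orientation-preserving homeomorphisms $f$ of $\mathbb{R}$ for which there are finitely many breakpoints $t_1<\dots<t_n$ in $P_A$ such that on each of the intervals $(-\infty,t_1]$, $[t_i,t_{i+1}]$ and $[t_n,\infty)$, $f$ agrees with a map $t\mapsto(at+b)/(ct+d)$ with $\begin{pmatrix}a&b\\c&d\end{pmatrix}\in PSL_2(A)$. *)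

From Stdlib Require Import Reals.
Open Scope R_scope.

Definition is_subring (A : R -> Prop) : Prop :=
  A 1 /\ (forall x y, A x -> A y -> A (x + y)) /\
  (forall x, A x -> A (- x)) /\ (forall x y, A x -> A y -> A (x * y)).

(* An element of SL_2(A) (a lift of an element of PSL_2(A)); the sign ambiguity
   is irrelevant for |trace| and for the Moebius action. *)
Definition SL2 (A : R -> Prop) (a b c d : R) : Prop :=
  A a /\ A b /\ A c /\ A d /\ a * d - b * c = 1.

Definition moebius_fixed (a b c d x : R) : Prop :=
  c * x + d <> 0 /\ (a * x + b) / (c * x + d) = x.

(* P_A intersected with R (breakpoints are real numbers). *)
Definition P_A (A : R -> Prop) (x : R) : Prop :=
  exists a b c d, SL2 A a b c d /\ Rabs (a + d) > 2 /\ moebius_fixed a b c d x.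

Definition or_pres_homeo (f : R -> R) : Prop :=
  (forall x, continuity_pt f x) /\
  (forall x y, x < y -> f x < f y) /\
  (forall y, exists x, f x = y).

Definition agrees_moebius_on (I : R -> Prop) (f : R -> R) (a b c d : R) : Prop :=
  forall x, I x -> c * x + d <> 0 /\ f x = (a * x + b) / (c * x + d).

(* The i-th piece (0 <= i <= n) determined by breakpoints t 0 < ... < t (n-1):
   (-oo, t 0], [t (i-1), t i], [t (n-1), +oo)  (all of R when n = 0). *)
Definition piece (n : nat) (t : nat -> R) (i : nat) (x : R) : Prop :=
  (i = 0%nat \/ t (i - 1)%nat <= x) /\ (i = n \/ x <= t i).

Definition in_H (A : R -> Prop) (f : R -> R) : Prop :=
  or_pres_homeo f /\
  exists (n : nat) (t : nat -> R),
    (forall i, (i + 1 < n)%nat -> t i < t (i + 1)%nat) /\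
    (forall i, (i < n)%nat -> P_A A (t i)) /\
    (forall i, (i <= n)%nat ->
       exists a b c d, SL2 A a b c d /\ agrees_moebius_on (piece n t i) f a b c d).

From Stdlib Require Import Reals Lra Lia.
Open Scope R_scope.

(* The map [t |-> s - 1/t] has trace [s]; conjugated by the translation by an
   integer [k] it becomes [g t = k + s - 1/(t - k)], whose fixed points are the
   [k + u] with [u^2 - s u + 1 = 0].  Moreover [g (k + w) = k + w + r] exactly
   when [w^2 - (s - r) w + 1 = 0], i.e. when [k + w] is a fixed point of the
   analogous map of trace [s - r].  For [s] large both traces exceed 2, and a
   root [u] of the first equation can be chosen below a root [w] of the second.
   Gluing the identity on [(-oo, k + u]], [g] on [[k + u, k + w]] and the
   translation by [r] on [[k + w, +oo)] gives the required element of [H(A)],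
   and taking [k] very negative pushes [k + w] to the left of [p]. *)

Definition clamp (y z x : R) : R := Rmax y (Rmin x z).

Lemma clamp_left y z x : x <= y -> clamp y z x = y.
Proof. unfold clamp, Rmax, Rmin; repeat destruct Rle_dec; lra. Qed.

Lemma clamp_id y z x : y <= x <= z -> clamp y z x = x.
Proof. unfold clamp, Rmax, Rmin; repeat destruct Rle_dec; lra. Qed.

Lemma clamp_right y z x : y <= z -> z <= x -> clamp y z x = z.
Proof. unfold clamp, Rmax, Rmin; repeat destruct Rle_dec; lra. Qed.

Lemma clamp_between y z x : y <= z -> y <= clamp y z x <= z.
Proof. unfold clamp, Rmax, Rmin; repeat destruct Rle_dec; lra. Qed.

Lemma clamp_le y z u v : u <= v -> clamp y z u <= clamp y z v.
Proof. unfold clamp, Rmax, Rmin; repeat destruct Rle_dec; lra. Qed.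

Lemma clamp_sub_le y z u v : u <= v -> clamp y z v - clamp y z u <= v - u.
Proof. unfold clamp, Rmax, Rmin; repeat destruct Rle_dec; lra. Qed.

Lemma continuity_pt_clamp y z x : continuity_pt (clamp y z) x.
Proof.
  intros eps Heps; exists eps; split; [exact Heps|].
  intros u [_ Hu]; simpl in *; unfold R_dist in *.
  apply (Rle_lt_trans _ (Rabs (u - x))); [|exact Hu].
  destruct (Rle_dec u x).
  - rewrite Rabs_minus_sym, (Rabs_minus_sym u).
    pose proof (clamp_le y z u x ltac:(lra)); pose proof (clamp_sub_le y z u x ltac:(lra)).
    rewrite !Rabs_right; lra.
  - pose proof (clamp_le y z x u ltac:(lra)); pose proof (clamp_sub_le y z x u ltac:(lra)).
    rewrite !Rabs_right; lra.
Qed.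

Section Glue.

Variables (y z r : R) (h : R -> R).
Hypotheses (Hyz : y < z) (hy : h y = y) (hz : h z = z + r).
Hypothesis h_increasing : forall u v, y <= u -> u < v -> v <= z -> h u < h v.
Hypothesis h_continuous : forall x, y <= x <= z -> continuity_pt h x.

Definition glue (x : R) : R := h (clamp y z x) + (x - clamp y z x).

Lemma glue_left x : x <= y -> glue x = x.
Proof. intros Hx; unfold glue; rewrite clamp_left, hy by lra; ring. Qed.

Lemma glue_mid x : y <= x <= z -> glue x = h x.
Proof. intros Hx; unfold glue; rewrite clamp_id by lra; ring. Qed.

Lemma glue_right x : z <= x -> glue x = x + r.
Proof. intros Hx; unfold glue; rewrite clamp_right, hz by lra; ring. Qed.

Lemma glue_increasing u v : u < v -> glue u < glue v.
Proof.
  intros Huv; unfold glue.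
  pose proof (clamp_sub_le y z u v ltac:(lra)).
  destruct (Req_dec (clamp y z u) (clamp y z v)) as [E|N].
  - rewrite E; lra.
  - pose proof (clamp_le y z u v ltac:(lra)).
    pose proof (clamp_between y z u ltac:(lra)).
    pose proof (clamp_between y z v ltac:(lra)).
    assert (h (clamp y z u) < h (clamp y z v)) by (apply h_increasing; lra).
    lra.
Qed.

Lemma glue_continuity_pt x : continuity_pt glue x.
Proof.
  pose proof (continuity_pt_clamp y z x) as Hcl.
  apply continuity_pt_plus.
  - apply (continuity_pt_comp (clamp y z) h); [exact Hcl|].
    apply h_continuous, clamp_between; lra.
  - apply continuity_pt_minus; [apply derivable_continuous_pt; reg | exact Hcl].
Qed.

Lemma glue_surjective v : exists x, glue x = v.
Proof.
  assert (y < z + r) by (rewrite <- hy, <- hz; apply h_increasing; lra).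
  destruct (Rle_dec v y). { exists v; apply glue_left; lra. }
  destruct (Rle_dec (z + r) v). { exists (v - r); rewrite glue_right by lra; ring. }
  destruct (IVT (fun x => glue x - v) y z) as [x [_ Hx]].
  - intros x; apply continuity_pt_minus;
      [apply glue_continuity_pt | apply continuity_pt_const; intros ? ?; reflexivity].
  - exact Hyz.
  - rewrite glue_left; lra.
  - rewrite glue_right; lra.
  - exists x; lra.
Qed.

Lemma or_pres_homeo_glue : or_pres_homeo glue.
Proof.
  split; [exact glue_continuity_pt|].
  split; [exact glue_increasing | exact glue_surjective].
Qed.

End Glue.

Definition moebius (a b c d t : R) : R := (a * t + b) / (c * t + d).

Lemma moebius_increasing a b c d u v :
  a * d - b * c = 1 -> 0 < c * u + d -> 0 < c * v + d -> u < v ->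
  moebius a b c d u < moebius a b c d v.
Proof.
  intros Hdet Hu Hv Huv; unfold moebius; apply Rlt_0_minus.
  replace ((a * v + b) / (c * v + d) - (a * u + b) / (c * u + d))
    with ((a * d - b * c) * (v - u) / ((c * u + d) * (c * v + d))) by (field; lra).
  rewrite Hdet; apply Rdiv_lt_0_compat; [lra | apply Rmult_lt_0_compat; lra].
Qed.

Lemma continuity_pt_moebius a b c d x :
  c * x + d <> 0 -> continuity_pt (moebius a b c d) x.
Proof. intros Hx; unfold moebius; reg. Qed.

Lemma shifted_moebius s k u :
  u <> 0 -> moebius (s + k) (- ((s + k) * k + 1)) 1 (- k) (k + u) = k + (s - / u).
Proof.
  intros Hu; unfold moebius.
  replace (1 * (k + u) + - k) with u by ring.
  field; exact Hu.
Qed.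

Lemma quadratic_root_nonzero q u : u * u - q * u + 1 = 0 -> u <> 0.
Proof. intros Hu ->; lra. Qed.

Lemma quadratic_root_inv q u : u * u - q * u + 1 = 0 -> q - / u = u.
Proof.
  intros Hu; pose proof (quadratic_root_nonzero q u Hu).
  apply (Rmult_eq_reg_r u); [|assumption].
  field_simplify; [lra | assumption].
Qed.

Definition large_root (q : R) : R := (q + sqrt (q * q - 4)) / 2.

Lemma large_root_spec q :
  2 < q -> large_root q * large_root q - q * large_root q + 1 = 0 /\
           1 < large_root q < q.
Proof.
  intros Hq; unfold large_root.
  pose proof (sqrt_sqrt (q * q - 4) ltac:(nra)).
  pose proof (sqrt_pos (q * q - 4)).
  split; [nra | split; nra].
Qed.

Lemma large_root_increasing q s : 2 < q < s -> large_root q < large_root s.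
Proof.
  intros Hqs; unfold large_root.
  assert (sqrt (q * q - 4) < sqrt (s * s - 4)) by (apply sqrt_lt_1; nra).
  lra.
Qed.

Lemma quadratic_root_reciprocal q u :
  u * u - q * u + 1 = 0 -> / u * / u - q * / u + 1 = 0.
Proof.
  intros Hu; pose proof (quadratic_root_nonzero q u Hu).
  replace (/ u * / u - q * / u + 1) with ((u * u - q * u + 1) / (u * u)) by (field; auto).
  rewrite Hu; unfold Rdiv; ring.
Qed.

(* For [q < s] use the small roots [1 / large_root], which decrease with the trace. *)
Lemma ordered_roots s q :
  2 < s -> 2 < q -> s <> q ->
  exists u w, 0 < u < w /\ w < Rmax s q /\
    u * u - s * u + 1 = 0 /\ w * w - q * w + 1 = 0.
Proof.
  intros Hs Hq Hsq.
  destruct (large_root_spec s Hs) as [Rs Bs].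
  destruct (large_root_spec q Hq) as [Rq Bq].
  destruct (Rlt_dec s q) as [Hlt|Hge].
  - pose proof (large_root_increasing s q ltac:(lra)).
    exists (large_root s), (large_root q).
    split; [lra|]; split; [|auto].
    apply (Rlt_le_trans _ q); [lra | apply Rmax_r].
  - pose proof (large_root_increasing q s ltac:(lra)).
    exists (/ large_root s), (/ large_root q).
    split; [split; [apply Rinv_0_lt_compat; lra | apply Rinv_lt_contravar; nra]|].
    split; [|split; apply quadratic_root_reciprocal; assumption].
    apply (Rlt_le_trans _ 1); [|pose proof (Rmax_l s q); lra].
    rewrite <- Rinv_1; apply Rinv_lt_contravar; lra.
Qed.

Section Subring.

Variable A : R -> Prop.
Hypothesis HA : is_subring A.

Lemma subring_0 : A 0.
Proof.
  destruct HA as (H1 & Hadd & Hopp & _).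
  replace 0 with (1 + Ropp 1) by ring; auto.
Qed.

Lemma subring_INR n : A (INR n).
Proof.
  destruct HA as (H1 & Hadd & _).
  induction n; [exact subring_0 | rewrite S_INR; auto].
Qed.

Lemma subring_unbounded x : exists n, A n /\ x < n.
Proof.
  destruct (INR_unbounded x) as [n Hn].
  exists (INR n); split; [apply subring_INR | lra].
Qed.

Lemma subring_unbounded_below x : exists k, A k /\ k < x.
Proof.
  destruct (subring_unbounded (- x)) as [n [An Hn]].
  exists (- n); split; [apply HA, An | lra].
Qed.

Lemma SL2_translation r : A r -> SL2 A 1 r 0 1.
Proof.
  intros Ar; pose proof subring_0; destruct HA as (H1 & _).
  repeat split; auto; ring.
Qed.

Lemma in_H_id : in_H A (fun t => t).
Proof.
  split.
  - split; [intros x; apply derivable_continuous_pt; reg|].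
    split; [intros; lra | intros v; exists v; reflexivity].
  - exists 0%nat, (fun _ => 0).
    split; [intros; lia|]; split; [intros; lia|].
    intros i _; exists 1, 0, 0, 1; split; [apply SL2_translation, subring_0|].
    intros x _; split; [lra | unfold Rdiv; field].
Qed.

Lemma in_H_glue y z r a b c d :
  A r -> SL2 A a b c d -> P_A A y -> P_A A z -> y < z ->
  (forall t, y <= t <= z -> 0 < c * t + d) ->
  moebius a b c d y = y -> moebius a b c d z = z + r ->
  in_H A (glue y z (moebius a b c d)).
Proof.
  intros Ar HM Py Pz Hyz Hden hy hz.
  pose proof HM as (_ & _ & _ & _ & Hdet).
  split.
  - apply (or_pres_homeo_glue y z r); auto.
    + intros u v Hu Huv Hv; apply moebius_increasing; auto; apply Hden; lra.
    + intros x Hx; apply continuity_pt_moebius; pose proof (Hden x Hx); lra.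
  - exists 2%nat, (fun i => match i with O => y | _ => z end).
    split; [intros i Hi; replace i with 0%nat by lia; exact Hyz|].
    split; [intros [|i] Hi; assumption|].
    intros [|[|[|i]]] Hi; [| | | lia].
    + exists 1, 0, 0, 1; split; [apply SL2_translation, subring_0|].
      intros x [_ [Hx|Hx]]; [lia|]; simpl in Hx.
      split; [lra | rewrite (glue_left y z _ hy) by lra; field].
    + exists a, b, c, d; split; [exact HM|].
      intros x [[Hx|Hx] [Hx'|Hx']]; try lia; simpl in Hx, Hx'.
      split; [pose proof (Hden x (conj Hx Hx')); lra|].
      rewrite glue_mid by lra; reflexivity.
    + exists 1, r, 0, 1; split; [apply SL2_translation, Ar|].
      intros x [[Hx|Hx] _]; [lia|]; simpl in Hx.
      split; [lra | rewrite (glue_right y z r _ Hyz hz) by lra; field].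
Qed.

Lemma SL2_shifted s k :
  A s -> A k -> SL2 A (s + k) (- ((s + k) * k + 1)) 1 (- k).
Proof.
  intros As Ak; destruct HA as (H1 & Hadd & Hopp & Hmul).
  repeat split; auto; ring.
Qed.

Lemma P_A_shifted_root s k u :
  A s -> A k -> 2 < s -> u * u - s * u + 1 = 0 -> P_A A (k + u).
Proof.
  intros As Ak Hs Hu; pose proof (quadratic_root_nonzero s u Hu).
  exists (s + k), (- ((s + k) * k + 1)), 1, (- k).
  split; [apply SL2_shifted; assumption|].
  split; [replace (s + k + - k) with s by ring; rewrite Rabs_right; lra|].
  split; [replace (1 * (k + u) + - k) with u by ring; assumption|].
  change (moebius (s + k) (- ((s + k) * k + 1)) 1 (- k) (k + u) = k + u).
  rewrite shifted_moebius, quadratic_root_inv with (u := u); auto.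
Qed.

End Subring.

Theorem mainTheorem12 (A : R -> Prop) (HA : is_subring A) (r p : R) (Hr : A r) :
  exists f : R -> R, in_H A f /\
    (exists y, y < p /\ forall t, t < y -> f t = t) /\
    (forall t, p < t -> f t = t + r).
Proof.
  destruct (Req_dec r 0) as [->|Hr0].
  { exists (fun t => t); split; [apply in_H_id, HA|].
    split; [exists (p - 1); split; [lra | auto] | intros; ring]. }
  pose proof (Rle_abs r); pose proof (Rle_abs (- r)); rewrite Rabs_Ropp in *.
  destruct (subring_unbounded A HA (Rabs r + 2)) as [s [As Hs]].
  destruct (ordered_roots s (s - r)) as (u & w & Huw & Hw & Ru & Rw); [lra | lra | lra |].
  assert (Hmax : Rmax s (s - r) <= s + Rabs r) by (apply Rmax_lub; lra).
  destruct (subring_unbounded_below A HA (p - s - Rabs r)) as [k [Ak Hk]].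
  assert (As_r : A (s - r)) by (apply HA; [exact As | apply HA, Hr]).
  set (g := moebius (s + k) (- ((s + k) * k + 1)) 1 (- k)).
  assert (gy : g (k + u) = k + u).
  { unfold g; rewrite shifted_moebius, quadratic_root_inv with (u := u); lra. }
  assert (gz : g (k + w) = k + w + r).
  { unfold g; rewrite shifted_moebius by lra.
    pose proof (quadratic_root_inv (s - r) w Rw); lra. }
  exists (glue (k + u) (k + w) g).
  split; [|split].
  - apply (in_H_glue A HA _ _ r); auto; try lra.
    + apply SL2_shifted; assumption.
    + apply (P_A_shifted_root A HA s); auto; lra.
    + apply (P_A_shifted_root A HA (s - r)); auto; lra.
    + intros t Ht; lra.
  - exists (k + u); split; [lra|]; intros t Ht; apply (glue_left _ _ _ gy); lra.
  - intros t Ht; apply (glue_right (k + u) (k + w) r g ltac:(lra) gz); lra.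
Qed.
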